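(* Let $m,v,x>0$, $w\geq 0$ and $u\in\mathbb{R}$. Let $\mathfrak{n}$ be the five-dimensional real Lie algebra with basis $\{E_1,\dots,E_5\}$ whose only non-vanishing brackets (up to antisymmetry) are $$[E_1,E_2]=mE_3+uE_5,\qquad [E_1,E_3]=vE_4+wE_5,\qquad [E_1,E_4]=xE_5.$$ Equip the corresponding simply connected nilpotent Lie group with the left-invariant Riemannian metric for which $\{E_1,\dots,E_5\}$ is orthonormal. Then this metric is an algebraic Ricci soliton if and only if $$x=m,\qquad u=w=0,\qquad v=\tfrac{2}{\sqrt3}m.$$ In that case $$c=-2m^2,\qquad D=\mathrm{diag}\big(\tfrac13m^2,\tfrac32m^2,\tfrac{11}6m^2,\tfrac{13}6m^2,\tfrac52m^2\big),$$ where $D$ is written as a matrix with respect to the basis $\{E_1,\dots,E_5\}$.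
   Context: Let $G$ be a Lie group with Lie algebra $\mathfrak{g}$ and let $g$ be a left-invariant Riemannian metric on $G$. Let $\mathrm{Ric}$ denote the $(1,1)$ Ricci tensor of $g$, viewed as a linear endomorphism of $\mathfrak{g}$. The metric $g$ is an algebraic Ricci soliton if there are a real number $c$ and a derivation $D$ of $\mathfrak{g}$ such that $\mathrm{Ric}=c\,\mathrm{Id}+D$. The notation $\mathrm{diag}(a_1,\dots,a_5)$ denotes the diagonal matrix with these entries. *)

(* Real scalars: an arbitrary real closed field R
   (the statement is purely algebraic; R = the reals is an instance). *)
From HB Require Import structures.
From mathcomp Require Import all_boot all_order all_algebra.
Set Implicit Arguments. Unset Strict Implicit. Unset Printing Implicit Defensive.
Import Order.TTheory GRing.Theory Num.Theory.
Local Open Scope ring_scope.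

Section MetricLie.
Variables (R : rcfType) (n : nat).

(* Vectors of the Lie algebra are row vectors of coordinates with respect to
   the basis E_0, ..., E_(n-1); the metric makes this basis orthonormal. *)
Definition ebasis (k : 'I_n) : 'rV[R]_n := delta_mx 0 k.

Definition lbracket (C : 'I_n -> 'I_n -> 'rV[R]_n) (X Y : 'rV[R]_n) : 'rV[R]_n :=
  \sum_(i < n) \sum_(j < n) (X 0 i * Y 0 j) *: C i j.

Definition linner (X Y : 'rV[R]_n) : R := \sum_(i < n) X 0 i * Y 0 i.

(* Levi-Civita connection on left-invariant fields (Koszul formula):
   <nabla_X Y, Z> = 1/2 (<[X,Y],Z> - <[Y,Z],X> + <[Z,X],Y>). *)
Definition lnabla C (X Y : 'rV[R]_n) : 'rV[R]_n :=
  \sum_(k < n) ((linner (lbracket C X Y) (ebasis k)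
                - linner (lbracket C Y (ebasis k)) X
                + linner (lbracket C (ebasis k) X) Y) / 2%:R) *: ebasis k.

Definition lcurv C (X Y Z : 'rV[R]_n) : 'rV[R]_n :=
  lnabla C X (lnabla C Y Z) - lnabla C Y (lnabla C X Z)
  - lnabla C (lbracket C X Y) Z.

Definition lric C (X Y : 'rV[R]_n) : R :=
  \sum_(k < n) linner (lcurv C (ebasis k) X Y) (ebasis k).

(* The (1,1) Ricci tensor as a matrix w.r.t. the orthonormal basis
   (entries Ric(E_i, E_j); endomorphisms act on row vectors by X *m M). *)
Definition ricci_mx C : 'M[R]_n := \matrix_(i < n, j < n) lric C (ebasis i) (ebasis j).

Definition is_derivation C (D : 'M[R]_n) : Prop :=
  forall X Y : 'rV[R]_n,
    lbracket C X Y *m D = lbracket C (X *m D) Y + lbracket C X (Y *m D).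

Definition algebraic_ricci_soliton C : Prop :=
  exists (c : R) (D : 'M[R]_n), is_derivation C D /\ ricci_mx C = c%:M + D.

End MetricLie.

(* The five-dimensional Lie algebra n of the statement.  Index k : 'I_5
   corresponds to the basis vector E_(k+1). *)
Definition E5 {R : rcfType} (k : nat) : 'rV[R]_5 := @ebasis R 5 (inord k).

Definition brk5 {R : rcfType} (m u v w x : R) (i j : 'I_5) : 'rV[R]_5 :=
  match nat_of_ord i, nat_of_ord j with
  | 0%N, 1%N => m *: E5 2 + u *: E5 4
  | 1%N, 0%N => - (m *: E5 2 + u *: E5 4)
  | 0%N, 2%N => v *: E5 3 + w *: E5 4
  | 2%N, 0%N => - (v *: E5 3 + w *: E5 4)
  | 0%N, 3%N => x *: E5 4
  | 3%N, 0%N => - (x *: E5 4)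
  | _, _ => 0
  end.

Definition diag5 {R : rcfType} (a1 a2 a3 a4 a5 : R) : 'M[R]_5 :=
  diag_mx (\row_(i < 5) nth 0 [:: a1; a2; a3; a4; a5] i).

From HB Require Import structures.
From mathcomp Require Import all_boot all_order all_algebra.
From mathcomp Require Import ring lra.
Import Order.TTheory GRing.Theory Num.Theory.
Local Open Scope ring_scope.

(* In coordinates the bracket, the Koszul formula and the Ricci form are explicit
   polynomials; Ric has no E_1 component, so D = Ric - c Id is forced.  The derivation
   identity on the pairs (E_1, E_j), j = 2, 3, 4, yields five polynomial equations
   which, as m, v, x > 0, force u = w = 0, x = m, v^2 = 4m^2/3 and c = -2m^2.
   Conversely Ric + 2m^2 Id is then diagonal with eigenvalues d_1, ..., d_5 satisfying
   d_1 + d_j = d_(j+1) for j = 2, 3, 4, which is exactly what makes it a derivation. *)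

Lemma sum_ord5 (V : nmodType) (F : 'I_5 -> V) :
  \sum_(i < 5) F i = F (inord 0) + F (inord 1) + F (inord 2) + F (inord 3) + F (inord 4).
Proof.
rewrite !big_ord_recl big_ord0 addr0 !addrA.
by congr (_ + _ + _ + _ + _); congr F; apply/val_inj; rewrite /= inordK.
Qed.

Lemma ord5_inord k (lt_k5 : (k < 5)%N) : Ordinal lt_k5 = inord k :> 'I_5.
Proof. by apply/val_inj; rewrite /= inordK. Qed.

Section Row5.
Context {R : nzRingType}.

Definition row5 (a0 a1 a2 a3 a4 : R) : 'rV[R]_5 :=
  \row_(i < 5) nth 0 [:: a0; a1; a2; a3; a4] i.

Lemma row5E a0 a1 a2 a3 a4 k : (k < 5)%N ->
  row5 a0 a1 a2 a3 a4 0 (inord k) = nth 0 [:: a0; a1; a2; a3; a4] k.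
Proof. by move=> lt_k5; rewrite mxE inordK. Qed.

Lemma row5_eta (X : 'rV[R]_5) :
  X = row5 (X 0 (inord 0)) (X 0 (inord 1)) (X 0 (inord 2)) (X 0 (inord 3)) (X 0 (inord 4)).
Proof.
by apply/rowP => -[[|[|[|[|[|k]]]]] lt_k5] //; rewrite mxE /= ord5_inord.
Qed.

Lemma row5_inj a0 a1 a2 a3 a4 b0 b1 b2 b3 b4 :
  row5 a0 a1 a2 a3 a4 = row5 b0 b1 b2 b3 b4 ->
  [/\ a0 = b0, a1 = b1, a2 = b2, a3 = b3 & a4 = b4].
Proof.
move=> eq_ab; have entry k := congr1 (fun X : 'rV[R]_5 => X 0 (inord k)) eq_ab.
by split; [move: (entry 0%N) | move: (entry 1%N) | move: (entry 2%N)
          | move: (entry 3%N) | move: (entry 4%N)]; rewrite !row5E //= => ->.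
Qed.

Lemma row5D a0 a1 a2 a3 a4 b0 b1 b2 b3 b4 :
  row5 a0 a1 a2 a3 a4 + row5 b0 b1 b2 b3 b4
  = row5 (a0 + b0) (a1 + b1) (a2 + b2) (a3 + b3) (a4 + b4).
Proof. by apply/rowP => i; rewrite !mxE; case: i => [[|[|[|[|[|]]]]] ?]. Qed.

Lemma row5N a0 a1 a2 a3 a4 : - row5 a0 a1 a2 a3 a4 = row5 (- a0) (- a1) (- a2) (- a3) (- a4).
Proof. by apply/rowP => i; rewrite !mxE; case: i => [[|[|[|[|[|]]]]] ?]. Qed.

Lemma row5B a0 a1 a2 a3 a4 b0 b1 b2 b3 b4 :
  row5 a0 a1 a2 a3 a4 - row5 b0 b1 b2 b3 b4
  = row5 (a0 - b0) (a1 - b1) (a2 - b2) (a3 - b3) (a4 - b4).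
Proof. by rewrite row5N row5D. Qed.

Lemma row5Z s a0 a1 a2 a3 a4 :
  s *: row5 a0 a1 a2 a3 a4 = row5 (s * a0) (s * a1) (s * a2) (s * a3) (s * a4).
Proof. by apply/rowP => i; rewrite !mxE; case: i => [[|[|[|[|[|k]]]]] ?] //=; rewrite mulr0. Qed.

Lemma row5_0 : row5 0 0 0 0 0 = 0 :> 'rV[R]_5.
Proof. by apply/rowP => i; rewrite !mxE; case: i => [[|[|[|[|[|]]]]] ?]. Qed.

Lemma mulmx_row5 a0 a1 a2 a3 a4 (M : 'M[R]_5) :
  let col k := a0 * M (inord 0) (inord k) + a1 * M (inord 1) (inord k)
    + a2 * M (inord 2) (inord k) + a3 * M (inord 3) (inord k) + a4 * M (inord 4) (inord k) in
  row5 a0 a1 a2 a3 a4 *m M = row5 (col 0%N) (col 1%N) (col 2%N) (col 3%N) (col 4%N).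
Proof.
apply/rowP => j; rewrite [LHS]mxE sum_ord5 !row5E //=.
by case: j => [[|[|[|[|[|?]]]]] lt_j5] //; rewrite mxE /= ord5_inord.
Qed.

End Row5.

Lemma ebasis_row5 (R : rcfType) k : (k < 5)%N ->
  @ebasis R 5 (inord k) = row5 (k == 0)%:R (k == 1)%:R (k == 2)%:R (k == 3)%:R (k == 4)%:R.
Proof.
move=> lt_k5; apply/rowP => i; rewrite !mxE /= -val_eqE /= inordK //.
by case: i => [[|[|[|[|[|]]]]] ?] //=; rewrite eq_sym.
Qed.

Lemma linner_row5 (R : rcfType) (a0 a1 a2 a3 a4 b0 b1 b2 b3 b4 : R) :
  linner (row5 a0 a1 a2 a3 a4) (row5 b0 b1 b2 b3 b4)
  = a0 * b0 + a1 * b1 + a2 * b2 + a3 * b3 + a4 * b4.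
Proof. by rewrite /linner sum_ord5 !row5E. Qed.

Section BracketN5.
Variables (R : rcfType) (m u v w x : R).
Notation C := (brk5 m u v w x).

Lemma lbracket_row5 a0 a1 a2 a3 a4 b0 b1 b2 b3 b4 :
  lbracket C (row5 a0 a1 a2 a3 a4) (row5 b0 b1 b2 b3 b4) =
  row5 0 0 (m * (a0 * b1 - a1 * b0)) (v * (a0 * b2 - a2 * b0))
    (u * (a0 * b1 - a1 * b0) + w * (a0 * b2 - a2 * b0) + x * (a0 * b3 - a3 * b0)).
Proof.
rewrite /lbracket !sum_ord5 !row5E // /brk5 !inordK //= /E5 !ebasis_row5 //=.
by rewrite !row5Z !row5D !row5N -!row5_0 !row5Z !row5D; congr row5; ring.
Qed.

Lemma lnabla_row5 a0 a1 a2 a3 a4 b0 b1 b2 b3 b4 :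
  lnabla C (row5 a0 a1 a2 a3 a4) (row5 b0 b1 b2 b3 b4) =
  row5 ((m * a1 * b2 + v * a2 * b3 + (u * a1 + w * a2 + x * a3) * b4
          + m * b1 * a2 + v * b2 * a3 + (u * b1 + w * b2 + x * b3) * a4) / 2%:R)
       ((- a0 * (m * b2 + u * b4) - b0 * (m * a2 + u * a4)) / 2%:R)
       ((m * (a0 * b1 - a1 * b0) - a0 * (v * b3 + w * b4) - b0 * (v * a3 + w * a4)) / 2%:R)
       ((v * (a0 * b2 - a2 * b0) - a0 * x * b4 - b0 * x * a4) / 2%:R)
       ((u * (a0 * b1 - a1 * b0) + w * (a0 * b2 - a2 * b0) + x * (a0 * b3 - a3 * b0)) / 2%:R).
Proof.
rewrite /lnabla !sum_ord5 !ebasis_row5 //= !lbracket_row5 !linner_row5 !row5Z !row5D.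
by congr row5; field.
Qed.

Lemma lric_row5 a0 a1 a2 a3 a4 b0 b1 b2 b3 b4 :
  lric C (row5 a0 a1 a2 a3 a4) (row5 b0 b1 b2 b3 b4) =
  (- (m ^+ 2 + u ^+ 2 + v ^+ 2 + w ^+ 2 + x ^+ 2) * a0 * b0 - (m ^+ 2 + u ^+ 2) * a1 * b1
   + (m ^+ 2 - v ^+ 2 - w ^+ 2) * a2 * b2 + (v ^+ 2 - x ^+ 2) * a3 * b3
   + (u ^+ 2 + w ^+ 2 + x ^+ 2) * a4 * b4
   - u * w * (a1 * b2 + a2 * b1) - u * x * (a1 * b3 + a3 * b1) - w * x * (a2 * b3 + a3 * b2)
   + m * u * (a2 * b4 + a4 * b2) + v * w * (a3 * b4 + a4 * b3)) / 2%:R.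
Proof.
rewrite /lric /lcurv sum_ord5 !ebasis_row5 //= !lnabla_row5 !lbracket_row5 !lnabla_row5.
by rewrite !row5B !linner_row5; field.
Qed.

End BracketN5.

Lemma eq0_of_scaled_diff {R : pzRingType} (k : R) {a b t : R} :
  a = b -> t = k * (a - b) -> t = 0.
Proof. by move=> -> ->; rewrite subrr mulr0. Qed.

Lemma soliton_params_of_constraints {R : realFieldType} {m u v w x c : R} :
  0 < m -> 0 < v -> 0 < x ->
  [/\ u * v * x = 0, w * (2%:R * m * u - v * x) = 0,
      m * (3%:R * m ^+ 2 + 3%:R * u ^+ 2 + x ^+ 2 + 2%:R * c) = 0,
      v * (3%:R * v ^+ 2 + u ^+ 2 + 3%:R * w ^+ 2 + 2%:R * c) = 0 &
      x * (m ^+ 2 + 3%:R * u ^+ 2 + 3%:R * w ^+ 2 + 3%:R * x ^+ 2 + 2%:R * c) = 0] ->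
  [/\ x = m, u = 0, w = 0, v ^+ 2 = 4%:R / 3%:R * m ^+ 2 & c = - (2%:R * m ^+ 2)].
Proof.
move=> m_gt0 v_gt0 x_gt0 [].
move=> /eqP; rewrite !mulf_eq0 (gt_eqF v_gt0) (gt_eqF x_gt0) !orbF => /eqP u0; subst u.
move=> /eqP; rewrite mulf_eq0 mulr0 sub0r oppr_eq0 mulf_eq0 (gt_eqF v_gt0) (gt_eqF x_gt0) !orbF.
move=> /eqP w0; subst w.
move=> /eqP; rewrite mulf_eq0 (gt_eqF m_gt0) /= => /eqP eq_m.
move=> /eqP; rewrite mulf_eq0 (gt_eqF v_gt0) /= => /eqP eq_v.
move=> /eqP; rewrite mulf_eq0 (gt_eqF x_gt0) /= => /eqP eq_x.
have x2E : x ^+ 2 = m ^+ 2 by lra.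
have xE : x = m by apply/eqP; rewrite -(eqrXn2 (_ : 0 < 2)%N) ?ltW // x2E.
by split => //; lra.
Qed.

Definition soliton_derivation {R : rcfType} (m : R) : 'M[R]_5 :=
  diag5 (m ^+ 2 / 3%:R) (3%:R / 2%:R * m ^+ 2) (11%:R / 6%:R * m ^+ 2)
        (13%:R / 6%:R * m ^+ 2) (5%:R / 2%:R * m ^+ 2).

Lemma is_derivation_soliton (R : rcfType) (m v : R) :
  is_derivation (brk5 m 0 v 0 m) (soliton_derivation m).
Proof.
move=> X Y; rewrite (row5_eta X) (row5_eta Y) !lbracket_row5 !mulmx_row5 !lbracket_row5.
rewrite /soliton_derivation /diag5 !mxE -!val_eqE /= !inordK //= !row5D.
by congr row5; field.
Qed.

Lemma ricci_mx_soliton (R : rcfType) (m v : R) : v ^+ 2 = 4%:R / 3%:R * m ^+ 2 ->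
  ricci_mx (brk5 m 0 v 0 m) = (- (2%:R * m ^+ 2))%:M + soliton_derivation m.
Proof.
move=> v2E; apply/matrixP => i j.
case: i => [[|[|[|[|[|?]]]]] lt_i5] //; case: j => [[|[|[|[|[|?]]]]] lt_j5] //.
all: rewrite !ord5_inord /soliton_derivation /diag5 !mxE -!val_eqE /= !inordK //=.
all: by rewrite !ebasis_row5 // lric_row5 /= v2E; field.
Qed.

Section SolitonN5.
Context {R : rcfType} {m u v w x : R}.
Notation C := (brk5 m u v w x).

Lemma soliton_constraints {c : R} {D : 'M[R]_5} :
  is_derivation C D -> ricci_mx C = c%:M + D ->
  [/\ u * v * x = 0, w * (2%:R * m * u - v * x) = 0,
      m * (3%:R * m ^+ 2 + 3%:R * u ^+ 2 + x ^+ 2 + 2%:R * c) = 0,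
      v * (3%:R * v ^+ 2 + u ^+ 2 + 3%:R * w ^+ 2 + 2%:R * c) = 0 &
      x * (m ^+ 2 + 3%:R * u ^+ 2 + 3%:R * w ^+ 2 + 3%:R * x ^+ 2 + 2%:R * c) = 0].
Proof.
move=> derD ricE.
have DE i j : (i < 5)%N -> (j < 5)%N ->
    D (inord i) (inord j) = lric C (@ebasis R 5 (inord i)) (@ebasis R 5 (inord j)) - c *+ (i == j).
  by move=> lt_i5 lt_j5; rewrite -[D](addKr c%:M) -ricE !mxE -val_eqE /= !inordK // addrC.
move: (derD (row5 1 0 0 0 0) (row5 0 1 0 0 0)) (derD (row5 1 0 0 0 0) (row5 0 0 1 0 0))
      (derD (row5 1 0 0 0 0) (row5 0 0 0 1 0)).
rewrite !lbracket_row5 !mulmx_row5 !lbracket_row5 !DE // !ebasis_row5 // !lric_row5 !row5D /=.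
move=> /row5_inj[_ _ e12 _ _] /row5_inj[_ e21 e22 e23 _] /row5_inj[_ _ _ _ e34].
split.
- by apply: (eq0_of_scaled_diff (- 2%:R) e21); field.
- by apply: (eq0_of_scaled_diff 2%:R e22); field.
- by apply: (eq0_of_scaled_diff 2%:R e12); field.
- by apply: (eq0_of_scaled_diff 2%:R e23); field.
- by apply: (eq0_of_scaled_diff 2%:R e34); field.
Qed.

Lemma soliton_data_unique {c : R} {D : 'M[R]_5} :
  0 < m -> 0 < v -> 0 < x -> is_derivation C D -> ricci_mx C = c%:M + D ->
  [/\ x = m, u = 0, w = 0, v ^+ 2 = 4%:R / 3%:R * m ^+ 2 & c = - (2%:R * m ^+ 2)]
  /\ D = soliton_derivation m.
Proof.
move=> m_gt0 v_gt0 x_gt0 derD ricE.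
have params := soliton_params_of_constraints m_gt0 v_gt0 x_gt0 (soliton_constraints derD ricE).
split=> //; case: params => xE uE wE v2E cE.
by apply: (addrI c%:M); rewrite -ricE xE uE wE ricci_mx_soliton // cE.
Qed.

End SolitonN5.

Lemma sqr_eq_four_thirds_sqr {R : rcfType} {m v : R} : 0 < m -> 0 < v ->
  v ^+ 2 = 4%:R / 3%:R * m ^+ 2 <-> v = 2%:R / Num.sqrt 3%:R * m.
Proof.
move=> m_gt0 v_gt0.
have sqrt3_gt0 : 0 < Num.sqrt (3%:R : R) by rewrite sqrtr_gt0 ltr0n.
have rhs2E : (2%:R / Num.sqrt 3%:R * m) ^+ 2 = 4%:R / 3%:R * m ^+ 2.
  by rewrite exprMn expr_div_n sqr_sqrtr ?ler0n //; congr (_ / _ * _); rewrite -natrX.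
have rhs_gt0 : 0 < 2%:R / Num.sqrt 3%:R * m by rewrite mulr_gt0 // divr_gt0 // ltr0n.
rewrite -rhs2E; split=> [|-> //] /eqP.
by rewrite eqrXn2 ?ltW // => /eqP.
Qed.

Theorem mainTheorem4 (R : rcfType) (m v x w u : R) :
  0 < m -> 0 < v -> 0 < x -> 0 <= w ->
  (algebraic_ricci_soliton (brk5 m u v w x)
     <-> [/\ x = m, u = 0, w = 0 & v = 2%:R / Num.sqrt 3%:R * m])
  /\
  (forall (c : R) (D : 'M[R]_5),
     is_derivation (brk5 m u v w x) D ->
     ricci_mx (brk5 m u v w x) = c%:M + D ->
     c = - (2%:R * m ^+ 2) /\
     D = diag5 (m ^+ 2 / 3%:R) (3%:R / 2%:R * m ^+ 2) (11%:R / 6%:R * m ^+ 2)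
               (13%:R / 6%:R * m ^+ 2) (5%:R / 2%:R * m ^+ 2)).
Proof.
move=> m_gt0 v_gt0 x_gt0 _.
have vE := sqr_eq_four_thirds_sqr m_gt0 v_gt0.
split=> [|c D derD ricE]; last first.
  by have [[_ _ _ _ ->] ->] := soliton_data_unique m_gt0 v_gt0 x_gt0 derD ricE.
split=> [[c [D [derD ricE]]] | [-> -> -> /vE v2E]].
  by have [[-> -> -> /vE v2E _] _] := soliton_data_unique m_gt0 v_gt0 x_gt0 derD ricE.
exists (- (2%:R * m ^+ 2)), (soliton_derivation m).
by split; [exact: is_derivation_soliton | exact: ricci_mx_soliton].
Qed.
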